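(* Let $p$ be a prime, $n,m\ge1$ integers with $p>n+m+2$, $q$ a power of $p$, and let $\mathrm{res}_{n,m}\in\mathbb{F}_q[a_0,\dots,a_n,b_0,\dots,b_m]$ be the generic resultant of $f=\sum_{0\le i\le n}a_ix^i$ and $g=\sum_{0\le i\le m}b_ix^i$. Then there is no nonzero $u\in\mathbb{F}_q^{n+m+2}$ such that $\mathrm{res}_{n,m}$ shifted by $u$ equals $\mathrm{res}_{n,m}$; i.e. $\mathrm{res}_{n,m}$ is not shift-invariant.
   Context: The generic resultant $\mathrm{res}_{n,m}$ is the determinant of the $(n+m)\times(n+m)$ Sylvester matrix of $f$ and $g$ with indeterminate coefficients $a_0,\dots,a_n,b_0,\dots,b_m$. A polynomial $F$ in $N$ variables $z$ shifted by $u\in\mathbb{F}_q^N$ is $F(z-u)$. *)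

From HB Require Import structures.
From mathcomp Require Import all_boot all_order all_algebra all_field.
Set Implicit Arguments. Unset Strict Implicit. Unset Printing Implicit Defensive.
Import Order.TTheory GRing.Theory Num.Theory.
Local Open Scope ring_scope.

(* Multivariate polynomials in k variables z_0,...,z_{k-1} over R, encoded as
   iterated univariate polynomials: mpoly R (k+1) = {poly mpoly R k}; the
   outermost indeterminate 'X of mpoly R (k+1) is the variable z_k. *)
Fixpoint mpoly (R : comNzRingType) (k : nat) : comNzRingType :=
  if k is k'.+1 then ({poly mpoly R k'} : comNzRingType) else R.

Fixpoint mcst (R : comNzRingType) (k : nat) : R -> mpoly R k :=
  match k return R -> mpoly R k with
  | k'.+1 => fun c => ((@mcst R k' c)%:P : {poly mpoly R k'})
  | 0 => fun c => c
  end.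

(* the variable z_i (zero if i >= k) *)
Fixpoint mvar (R : comNzRingType) (k : nat) (i : nat) : mpoly R k :=
  match k return mpoly R k with
  | k'.+1 => (if i == k' then 'X else (@mvar R k' i)%:P : {poly mpoly R k'})
  | 0 => 0
  end.

(* shift: F(z) |-> F(z - u), the substitution z_i := z_i - u_i for all i < k *)
Fixpoint mshift (R : comNzRingType) (k : nat) (u : nat -> R) : mpoly R k -> mpoly R k :=
  match k return mpoly R k -> mpoly R k with
  | k'.+1 => fun F : {poly mpoly R k'} =>
      ((map_poly (@mshift R k' u) F) \Po ('X - (@mcst R k' (u k'))%:P)
        : {poly mpoly R k'})
  | 0 => fun F => F
  end.

Definition ext_vec (R : comNzRingType) (N : nat) (u : 'I_N -> R) : nat -> R :=
  fun i => if insub i is Some j then u j else 0.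

(* Generic resultant res_{n,m} in F[a_0..a_n,b_0..b_m], with variables
   a_i = z_i (0 <= i <= n) and b_j = z_{n+1+j} (0 <= j <= m), N = n+m+2. *)
Definition gen_f (R : comNzRingType) (n m : nat) : {poly mpoly R (n + m + 2)} :=
  \poly_(i < n.+1) @mvar R (n + m + 2) i.
Definition gen_g (R : comNzRingType) (n m : nat) : {poly mpoly R (n + m + 2)} :=
  \poly_(j < m.+1) @mvar R (n + m + 2) (n.+1 + j).
Definition gen_res (R : comNzRingType) (n m : nat) : mpoly R (n + m + 2) :=
  resultant (gen_f R n m) (gen_g R n m).

From HB Require Import structures.
From mathcomp Require Import all_boot all_order all_algebra all_field.
From mathcomp Require Import zify.

(* Evaluating res_{n,m} at a point z gives the determinant of the Sylvester
   matrix, with formal degrees (n, m), of the specialised pair (f_z, g_z).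
   Shift invariance by u therefore says that this determinant is unchanged
   under (f, g) |-> (f + phi, g + psi) for all f, g of degrees <= n, m, where
   (phi, psi) != (0, 0) is read off u.  Pick r with psi(r) != 0 (or phi(r) != 0
   if psi = 0); such r exists because p exceeds the degrees.  Then choose f', g'
   of a shape that makes their Sylvester matrix triangular with nonzero
   diagonal, and with f'(r) = phi(r), g'(r) = psi(r): the pair (f' - phi,
   g' - psi) has the common root r, so its determinant is 0, while translating
   it gives (f', g') with nonzero determinant. *)

Set Implicit Arguments.
Unset Strict Implicit.
Unset Printing Implicit Defensive.
Import GRing.Theory.
Local Open Scope ring_scope.

Fixpoint meval (R : comNzRingType) (k : nat) (z : nat -> R) :
    {rmorphism mpoly R k -> R} :=
  match k return {rmorphism mpoly R k -> R} with
  | k'.+1 => (horner_eval (z k') \o map_poly (meval k' z)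
               : {rmorphism {poly mpoly R k'} -> R})
  | 0 => idfun
  end.

Section MpolyEval.
Variable R : comNzRingType.

Lemma meval_mcst k z (c : R) : meval k z (mcst k c) = c.
Proof. by elim: k => [//|k IHk] /=; rewrite /horner_eval map_polyC hornerC. Qed.

Lemma meval_mvar k z i : meval k z (mvar R k i) = if (i < k)%N then z i else 0.
Proof.
elim: k => [//|k IHk] /=; rewrite /horner_eval.
have [->|neq_ik] := eqVneq i k; first by rewrite map_polyX hornerX ltnSn.
by rewrite map_polyC hornerC [LHS]IHk ltnS ltn_neqAle neq_ik.
Qed.

Lemma meval_mshift k z u (P : mpoly R k) :
  meval k z (mshift u P) = meval k (z \- u) P.
Proof.
elim: k P => [//|k IHk] P /=; rewrite /horner_eval.
rewrite map_comp_poly horner_comp -map_poly_comp rmorphB /= map_polyX map_polyC.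
rewrite /= meval_mcst !hornerE; congr (_.[_]).
by apply: eq_map_poly => Q /=; exact: IHk.
Qed.

Lemma mvar_neq0 k i : (i < k)%N -> mvar R k i != 0.
Proof.
move=> lt_ik; apply/eqP => var0; have := meval_mvar k (fun=> 1) i.
by rewrite lt_ik var0 rmorph0 => /esym/eqP; rewrite oner_eq0.
Qed.

End MpolyEval.

(* The Sylvester matrix of p and q viewed as polynomials of formal degrees dp
   and dq; the library's [Sylvester_mx p q] uses the actual degrees instead,
   which are not stable under specialisation. *)
Definition Sylvester_mx_deg {R : nzRingType} (dp dq : nat) (p q : {poly R}) :
    'M[R]_(dq + dp) :=
  \matrix_(i, j) match split i with
                 | inl k => p`_(j - k) *+ (k <= j)%N
                 | inr k => q`_(j - k) *+ (k <= j)%N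
                 end.

Lemma Sylvester_mx_degE (R : nzRingType) dp dq (p q : {poly R}) i j :
  Sylvester_mx_deg dp dq p q i j =
  match split i with
  | inl k => p`_(j - k) *+ (k <= j)%N
  | inr k => q`_(j - k) *+ (k <= j)%N
  end.
Proof. exact: mxE. Qed.

Lemma map_Sylvester_mx (R S : nzRingType) (f : {rmorphism R -> S}) (p q : {poly R}) :
  map_mx f (Sylvester_mx p q) =
  Sylvester_mx_deg (size p).-1 (size q).-1 (map_poly f p) (map_poly f q).
Proof.
apply/matrixP => i j; rewrite [LHS]mxE Sylvester_mxE Sylvester_mx_degE.
by case: split => k; rewrite rmorphMn coef_map.
Qed.

Section SylvesterDeg.
Variables (dp dq : nat).

(* Row k of each band holds the coefficients of p * 'X^k, resp. q * 'X^k. *)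
Lemma Sylvester_mx_deg_mul_powers (R : comNzRingType) (p q : {poly R}) r :
    (size p <= dp.+1)%N -> (size q <= dq.+1)%N ->
  Sylvester_mx_deg dp dq p q *m \col_j (r ^+ j) =
  \col_i match split i with
         | inl k => p.[r] * r ^+ k
         | inr k => q.[r] * r ^+ k
         end.
Proof.
move=> size_p size_q; apply/colP => i; rewrite !mxE.
have row_horner (s : {poly R}) k : (size s + k <= dq + dp)%N ->
    \sum_(j < dq + dp) (s`_(j - k) *+ (k <= j)%N) * r ^+ j = s.[r] * r ^+ k.
  move=> size_sk; rewrite -hornerXn -hornerM (@horner_coef_wide _ (dq + dp)); last first.
    by rewrite (leq_trans (size_polyMleq _ _)) // size_polyXn addnS.
  apply: eq_bigr => j _; rewrite coefMXn ltnNge.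
  by case: (k <= j)%N; rewrite ?mulr0n ?mulr1n.
under eq_bigr => j _ do rewrite Sylvester_mx_degE mxE.
by case: (split i) => k; apply: row_horner; have := ltn_ord k; lia.
Qed.

Lemma det_Sylvester_mx_deg_root (F : fieldType) (p q : {poly F}) r :
    (0 < dq + dp)%N -> (size p <= dp.+1)%N -> (size q <= dq.+1)%N ->
  root p r -> root q r -> \det (Sylvester_mx_deg dp dq p q) = 0.
Proof.
move=> dS_gt0 size_p size_q /eqP p_r /eqP q_r.
pose c : 'cV[F]_(dq + dp) := \col_j (r ^+ j).
have c_ker : Sylvester_mx_deg dp dq p q *m c = 0.
  rewrite Sylvester_mx_deg_mul_powers //; apply/colP => i; rewrite !mxE.
  by case: split => k; rewrite ?p_r ?q_r mul0r.
apply/eqP; rewrite -det_tr; apply/det0P; exists c^T; last first.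
  by rewrite -trmx_mul c_ker trmx0.
apply/eqP => /matrixP /(_ 0 (Ordinal dS_gt0)) /eqP.
by rewrite !mxE expr0 oner_eq0.
Qed.

Lemma Sylvester_mx_deg_diag (R : comNzRingType) (p q : {poly R}) :
  \prod_(i < dq + dp) Sylvester_mx_deg dp dq p q i i = p`_0 ^+ dq * q`_dq ^+ dp.
Proof.
rewrite big_split_ord /=.
under eq_bigr => k _ do rewrite Sylvester_mx_degE (unsplitK (inl k)) subnn leqnn mulr1n.
under [X in _ * X]eq_bigr => k _ do
  rewrite Sylvester_mx_degE (unsplitK (inr k)) /= addnK leq_addl mulr1n.
by rewrite !prodr_const !card_ord.
Qed.

Lemma det_Sylvester_mx_deg_polyC (R : comNzRingType) (a : R) (q : {poly R}) :
  (size q <= dq.+1)%N ->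
  \det (Sylvester_mx_deg dp dq a%:P q) = a ^+ dq * q`_dq ^+ dp.
Proof.
move=> size_q; rewrite det_trig ?Sylvester_mx_deg_diag ?coefC //.
apply/is_trig_mxP => i j lt_ij; rewrite Sylvester_mx_degE.
case: (splitP i) => k def_i; rewrite def_i in lt_ij.
  by rewrite coefC subn_eq0 leqNgt (leq_ltn_trans _ lt_ij) ?mul0rn.
rewrite nth_default ?mul0rn //; apply: leq_trans size_q _; lia.
Qed.

Lemma det_Sylvester_mx_deg_monomial (R : comNzRingType) (p : {poly R}) (b : R) :
  \det (Sylvester_mx_deg dp dq p (b *: 'X^dq)) = p`_0 ^+ dq * b ^+ dp.
Proof.
rewrite -det_tr det_trig; last first.
  apply/is_trig_mxP => i j lt_ij; rewrite mxE Sylvester_mx_degE.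
  case: (splitP j) => k def_j; rewrite def_j in lt_ij.
    by rewrite leqNgt lt_ij mulr0n.
  rewrite coefZ coefXn; case: leqP => // le_ki.
  have /negPf -> : (i - k != dq)%N by lia.
  by rewrite mulr0.
under eq_bigr => i _ do rewrite mxE.
by rewrite Sylvester_mx_deg_diag coefZ coefXn eqxx mulr1.
Qed.

End SylvesterDeg.

Lemma eqr_nat_pchar (R : nzRingType) c i j :
  c \in [pchar R] -> (i%:R == j%:R :> R) = (i == j %[mod c]).
Proof.
move=> c_char; wlog le_ij : i j / (i <= j)%N.
  move=> wlog_ij; have [/wlog_ij //|/ltnW/wlog_ij] := leqP i j.
  by move=> eq_ji; rewrite eq_sym eq_ji eq_sym.
by rewrite eq_sym -subr_eq0 -natrB // -(dvdn_pcharf c_char (j - i)) eq_sym eqn_mod_dvd.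
Qed.

Lemma exists_nonzero_nonroot (F : fieldType) c (s : {poly F}) :
    c \in [pchar F] -> (size s < c)%N -> s != 0 ->
  exists2 r, r != 0 & ~~ root s r.
Proof.
move=> c_char lt_s_c s_neq0.
pose rs := [seq i.+1%:R : F | i <- iota 0 (size s)].
have rs_neq0 i : (i < size s)%N -> i.+1%:R != 0 :> F.
  by move=> lt_is; rewrite -(dvdn_pcharf c_char) gtnNdvd //; lia.
have [/hasP [_ /mapP [i i_s ->] r_nonroot]|/hasPn rs_roots] :=
  boolP (has (fun r => ~~ root s r) rs).
  by exists i.+1%:R => //; apply: rs_neq0; rewrite mem_iota in i_s.
have rs_uniq : uniq rs.
  rewrite map_inj_in_uniq ?iota_uniq // => i j; rewrite !mem_iota /= => i_s j_s.
  move/eqP; rewrite (@eqr_nat_pchar _ c) // !modn_small.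
  - by move/eqP => [].
  - exact: leq_ltn_trans j_s lt_s_c.
  - exact: leq_ltn_trans i_s lt_s_c.
case/negP: s_neq0; apply/eqP/(roots_geq_poly_eq0 _ rs_uniq).
  by apply/allP => r /rs_roots; rewrite negbK.
by rewrite size_map size_iota.
Qed.

Lemma ext_vecE (R : comNzRingType) N (u : 'I_N -> R) (i : 'I_N) : ext_vec u i = u i.
Proof. by rewrite /ext_vec valK. Qed.

Section GenericResultant.
Variables (F : fieldType) (n m : nat).

Definition gen_f_at (z : nat -> F) : {poly F} := \poly_(i < n.+1) z i.
Definition gen_g_at (z : nat -> F) : {poly F} := \poly_(j < m.+1) z (n.+1 + j)%N.

Definition join_coefs (p q : {poly F}) : nat -> F :=
  fun i => if (i < n.+1)%N then p`_i else q`_(i - n.+1).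

Lemma size_gen_f_at z : (size (gen_f_at z) <= n.+1)%N.
Proof. exact: size_poly. Qed.

Lemma size_gen_g_at z : (size (gen_g_at z) <= m.+1)%N.
Proof. exact: size_poly. Qed.

Lemma gen_f_atB z e : gen_f_at (z \- e) = gen_f_at z - gen_f_at e.
Proof. by apply/polyP => i; rewrite coefB !coef_poly; case: ifP; rewrite ?subr0. Qed.

Lemma gen_g_atB z e : gen_g_at (z \- e) = gen_g_at z - gen_g_at e.
Proof. by apply/polyP => i; rewrite coefB !coef_poly; case: ifP; rewrite ?subr0. Qed.

Lemma gen_f_at_join (p q : {poly F}) :
  (size p <= n.+1)%N -> gen_f_at (join_coefs p q) = p.
Proof.
move=> size_p; apply/polyP => i; rewrite coef_poly /join_coefs.
by case: ltnP => // le_ni; rewrite nth_default // (leq_trans size_p).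
Qed.

Lemma gen_g_at_join (p q : {poly F}) :
  (size q <= m.+1)%N -> gen_g_at (join_coefs p q) = q.
Proof.
move=> size_q; apply/polyP => j; rewrite coef_poly /join_coefs.
rewrite [(n.+1 + j < n.+1)%N]ltnNge leq_addr addKn.
by case: ltnP => // le_mj; rewrite nth_default // (leq_trans size_q).
Qed.

Lemma gen_fg_at_neq0 z :
  (exists2 i, (i < n + m + 2)%N & z i != 0) -> gen_f_at z != 0 \/ gen_g_at z != 0.
Proof.
case=> i lt_iN z_i; have [lt_in|le_ni] := ltnP i n.+1.
  by left; apply: contraNneq z_i => /polyP/(_ i); rewrite coef_poly lt_in coef0 => ->.
right; apply: contraNneq z_i => /polyP/(_ (i - n.+1)%N).
by rewrite coef_poly subnKC // coef0; case: ltnP => [_ ->|] //; lia.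
Qed.

Lemma meval_gen_res z :
  meval (n + m + 2) z (gen_res F n m) =
  \det (Sylvester_mx_deg n m (gen_f_at z) (gen_g_at z)).
Proof.
have meval_gen_var i :
    (i < n + m + 2)%N -> meval (n + m + 2) z (mvar F (n + m + 2) i) = z i.
  by move=> lt_iN; rewrite meval_mvar lt_iN.
rewrite /gen_res /resultant -det_map_mx map_Sylvester_mx.
rewrite /gen_f /gen_g !size_poly_eq ?mvar_neq0 //; try lia.
congr (\det (Sylvester_mx_deg _ _ _ _)); apply/polyP => i;
  rewrite coef_map !coef_poly; case: ltnP => lt_i; rewrite ?raddf0 //;
  apply: meval_gen_var; lia.
Qed.

Lemma det_Sylvester_mx_deg_translate e (p q : {poly F}) :
    mshift e (gen_res F n m) = gen_res F n m ->
    (size p <= n.+1)%N -> (size q <= m.+1)%N ->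
  \det (Sylvester_mx_deg n m (p + gen_f_at e) (q + gen_g_at e)) =
  \det (Sylvester_mx_deg n m p q).
Proof.
move=> res_shift size_p size_q.
have size_pf : (size (p + gen_f_at e)%R <= n.+1)%N.
  by rewrite (leq_trans (size_polyD _ _)) // geq_max size_p size_gen_f_at.
have size_qg : (size (q + gen_g_at e)%R <= m.+1)%N.
  by rewrite (leq_trans (size_polyD _ _)) // geq_max size_q size_gen_g_at.
have := meval_mshift (join_coefs (p + gen_f_at e) (q + gen_g_at e)) e
  (gen_res F n m).
rewrite res_shift !meval_gen_res gen_f_atB gen_g_atB.
by rewrite gen_f_at_join ?gen_g_at_join // !addrK.
Qed.

End GenericResultant.

Section TranslationWitness.
Variables (F : fieldType) (c dp dq : nat) (phi psi : {poly F}).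
Hypotheses (c_char : c \in [pchar F]) (dp_gt0 : (0 < dp)%N) (dq_gt0 : (0 < dq)%N).
Hypotheses (size_phi : (size phi <= dp.+1)%N) (size_psi : (size psi <= dq.+1)%N).

Definition det_translation_witness (p q : {poly F}) :=
  [/\ (size p <= dp.+1)%N, (size q <= dq.+1)%N &
      \det (Sylvester_mx_deg dp dq (p + phi) (q + psi)) !=
      \det (Sylvester_mx_deg dp dq p q)].

Lemma det_translation_witness_common_root (p q : {poly F}) r :
    (size p <= dp.+1)%N -> (size q <= dq.+1)%N ->
    p.[r] = phi.[r] -> q.[r] = psi.[r] ->
    \det (Sylvester_mx_deg dp dq p q) != 0 ->
  det_translation_witness (p - phi) (q - psi).
Proof.
move=> size_p size_q p_r q_r det_neq0.
have size_pB : (size (p - phi)%R <= dp.+1)%N.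
  by rewrite (leq_trans (size_polyD _ _)) // geq_max size_p size_polyN.
have size_qB : (size (q - psi)%R <= dq.+1)%N.
  by rewrite (leq_trans (size_polyD _ _)) // geq_max size_q size_polyN.
split=> //; rewrite !subrK (det_Sylvester_mx_deg_root (p := p - phi) (r := r)) //;
  try lia.
  by rewrite /root !hornerE p_r subrr.
by rewrite /root !hornerE q_r subrr.
Qed.

(* Witnesses 1 + c 'X and b 'X^dq: the transposed Sylvester matrix is
   triangular with diagonal entries 1 and b. *)
Lemma det_translation_witness_psi_neq0 :
  (dq.+1 < c)%N -> psi != 0 -> exists p q, det_translation_witness p q.
Proof.
move=> lt_dq_c psi_neq0.
have [r r_neq0 psi_r] :=
  exists_nonzero_nonroot c_char (leq_ltn_trans size_psi lt_dq_c) psi_neq0.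
set b := psi.[r] / r ^+ dq.
pose p := 1 + ((phi.[r] - 1) / r) *: 'X : {poly F}.
exists (p - phi), (b *: 'X^dq - psi).
apply: (det_translation_witness_common_root (r := r)).
- rewrite (leq_trans (size_polyD _ _)) // geq_max size_poly1.
  by rewrite (leq_trans (size_scale_leq _ _)) // size_polyX.
- by rewrite (leq_trans (size_scale_leq _ _)) // size_polyXn.
- by rewrite /p !hornerE divfK // addrC subrK.
- by rewrite !hornerE divfK // expf_neq0.
rewrite det_Sylvester_mx_deg_monomial coefD coef1 coefZ coefX /= mulr0 addr0.
rewrite expr1n mul1r.
by rewrite expf_neq0 // mulf_neq0 ?invr_eq0 ?expf_neq0.
Qed.

(* Witnesses the constant phi(r) and 'X^dq - r^dq (requires dq > 0). *)
Lemma det_translation_witness_phi_neq0 :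
  (dp.+1 < c)%N -> phi != 0 -> psi = 0 -> exists p q, det_translation_witness p q.
Proof.
move=> lt_dp_c phi_neq0 psi0.
have [r _ phi_r] :=
  exists_nonzero_nonroot c_char (leq_ltn_trans size_phi lt_dp_c) phi_neq0.
exists ((phi.[r])%:P - phi), ('X^dq - (r ^+ dq)%:P - psi).
apply: (det_translation_witness_common_root (r := r)).
- exact: leq_trans (size_polyC_leq1 _) _.
- by rewrite size_XnsubC.
- by rewrite hornerC.
- by rewrite psi0 !hornerE subrr.
rewrite det_Sylvester_mx_deg_polyC ?size_XnsubC //.
rewrite coefB coefXn coefC eqxx gtn_eqF // subr0 expr1n mulr1.
by rewrite expf_neq0.
Qed.

Lemma exists_det_translation_witness :
    (dp.+1 < c)%N -> (dq.+1 < c)%N -> phi != 0 \/ psi != 0 ->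
  exists p q, det_translation_witness p q.
Proof.
move=> lt_dp_c lt_dq_c phi_psi_neq0.
have [psi0|] := eqVneq psi 0; last exact: det_translation_witness_psi_neq0.
apply: det_translation_witness_phi_neq0 => //.
by case: phi_psi_neq0; rewrite ?psi0 ?eqxx.
Qed.

End TranslationWitness.

Theorem mainTheorem18 (F : finFieldType) (p n m : nat)
  (hp : prime p) (hchar : p \in [pchar F])
  (hn : (1 <= n)%N) (hm : (1 <= m)%N) (hpnm : (n + m + 2 < p)%N)
  (u : 'I_(n + m + 2) -> F) (hu : exists i, u i != 0) :
  mshift (ext_vec u) (gen_res F n m) != gen_res F n m.
Proof.
set e := ext_vec u.
have e_neq0 : exists2 i, (i < n + m + 2)%N & e i != 0.
  by case: hu => i u_i; exists i; rewrite // /e ext_vecE.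
have [p0 [q0 [size_p0 size_q0 det_neq]]] :
    exists p0 q0, det_translation_witness n m (gen_f_at n e) (gen_g_at n m e) p0 q0.
  apply: (exists_det_translation_witness hchar) (gen_fg_at_neq0 e_neq0);
    rewrite ?size_gen_f_at ?size_gen_g_at //; lia.
apply: contra_neq det_neq => res_shift.
exact: det_Sylvester_mx_deg_translate.
Qed.
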